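(* For $X>0$ let $N^*(X)$ be the number of finite tuples $(d_1,\dots,d_j)$ (with $j\ge1$ arbitrary, depending on the tuple) of natural numbers $d_k\ge1$ such that $\prod_{k=1}^j(3d_k)\le X$. Then $N^*(X)=0$ for $X<3$, and for every $X>0$, $$N^*(X)\le \Big(\frac X3\Big)^{5/3}.$$ *)

From mathcomp Require Import all_boot all_order all_algebra.
From mathcomp Require Import all_classical all_reals all_analysis.
Set Implicit Arguments. Unset Strict Implicit. Unset Printing Implicit Defensive.
Import Order.TTheory GRing.Theory Num.Theory.
Local Open Scope ring_scope.

(* The tuple (d_1,...,d_j) (j >= 1, d_k >= 1 natural numbers) is counted by
   N^*(X) iff prod_k (3 d_k) <= X.  Such a tuple automatically has length
   j <= X and entries d_k <= X (since 3 d_k >= 3 > 1 and d_k <= 3 d_k <= X),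
   hence j <= K and d_k <= K with K := floor(X) = Num.truncn X.  So N^*(X) is
   exactly the number of tuples of length j in [1, K] with entries in 'I_K.+1
   = {0,..,K} satisfying the conditions. *)
Definition good_tuple (R : realType) (X : R) (s : seq nat) : bool :=
  all (fun d => 0 < d)%N s && (((\prod_(d <- s) (3 * d))%N)%:R <= X).

Definition Nstar (R : realType) (X : R) : nat :=
  let K := Num.truncn X in
  (\sum_(1 <= j < K.+1)
     #|[set t : j.-tuple 'I_K.+1 | good_tuple X (map val t)]|)%N.

From mathcomp Require Import all_boot all_order all_algebra.
From mathcomp Require Import all_classical all_reals all_analysis.
From mathcomp Require Import zify ring lra.
Import Order.TTheory GRing.Theory Num.Theory.

(* Let [N(M)] count the tuples with [prod (3 d_k) <= M].  Removing the first
   entry [x] gives [N(M) = N_1(M) + sum_(x >= 1) N(M %/ (3 x))], where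
   [N_1(M) <= M / 3] counts the tuples of length one.  By induction, with
   [Y = M / 3], the sum is at most
   [sum_x (Y / (3 x))^(5/3) = (Y/3)^(5/3) sum_x x^(-5/3) <= 3 (Y/3)^(5/3)],
   the series being bounded by telescoping [k^(-3/2) <= 2/sqrt(k-1) - 2/sqrt k].
   Since [3^(2/3) >= 2], [Y + 3 (Y/3)^(5/3) <= Y^(5/3)] once [Y >= 3]; for
   [M < 9] only tuples of length one contribute. *)

Definition admissible (M : nat) (s : seq nat) : bool :=
  all (fun d => 0 < d) s && (\prod_(d <- s) (3 * d) <= M).

Definition adm_count (B j M : nat) : nat :=
  \sum_(t : j.-tuple 'I_B) admissible M (map val t).

Definition adm_count_upto (B J M : nat) : nat :=
  \sum_(j < J) adm_count B j.+1 M.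

Lemma card_admissible_tuples (B j M : nat) :
  #|[set t : j.-tuple 'I_B | admissible M (map val t)]| = adm_count B j M.
Proof.
rewrite -sum1_card big_mkcond /=; apply: eq_bigr => t _.
by rewrite inE; case: admissible.
Qed.

Lemma admissible0 (s : seq nat) : ~~ admissible 0 s.
Proof.
apply/andP => -[s_gt0]; rewrite leqn0 => /eqP prod0.
suff : \prod_(d <- s) (3 * d) != 0 by rewrite prod0.
rewrite prod_nat_seq_neq0; apply: sub_all s_gt0 => d /= d_gt0.
by rewrite muln_eq0 -lt0n d_gt0.
Qed.

Lemma adm_count_nil (B M : nat) : adm_count B 0 M = (0 < M).
Proof.
rewrite /adm_count (big_pred1 [tuple]) => [|t]; first by rewrite /admissible big_nil.
by rewrite /= (tuple0 t); apply/esym/eqP.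
Qed.

Lemma adm_count_bound0 (B j : nat) : adm_count B j 0 = 0.
Proof. by apply: big1 => t _; rewrite (negbTE (admissible0 _)). Qed.

Lemma adm_countS (B j M : nat) :
  adm_count B j.+1 M = \sum_(1 <= x < B) adm_count B j (M %/ (3 * x)).
Proof.
have cons_bij : {on [pred _ | true], bijective
    (fun p : 'I_B * j.-tuple 'I_B => [tuple of p.1 :: p.2])}.
  exists (fun t => (thead t, [tuple of behead t])) => [[x t] _ | t _] /=.
    by congr pair; apply: val_inj.
  by rewrite [RHS]tuple_eta.
rewrite /adm_count (reindex _ cons_bij) /=.
rewrite -(pair_big xpredT xpredT
  (fun x (t : j.-tuple 'I_B) => (admissible M (map val (x :: t)) : nat))) /=.
rewrite (bigID (fun x : 'I_B => 0 < x)) /= [X in _ + X]big1 ?addn0 => [|x];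
  last first.
  by rewrite -eqn0Ngt => /eqP x0; apply: big1 => t _; rewrite /admissible /= x0.
transitivity (\sum_(x < B | 0 < x) adm_count B j (M %/ (3 * x))).
  apply: eq_bigr => x x_gt0; apply: eq_bigr => t _.
  by rewrite /admissible /= x_gt0 big_cons leq_divRL ?muln_gt0 // mulnC.
rewrite -(big_mkord _ (fun x => adm_count B j (M %/ (3 * x)))).
case: B {cons_bij} => [|B]; first by rewrite !big_geq.
rewrite big_ltn_cond //= big_nat_cond [RHS]big_nat_cond.
by apply: eq_bigl => x; rewrite andbT andbC andbA andbb.
Qed.

Lemma adm_count_uptoS (B J M : nat) :
  adm_count_upto B J.+1 M =
  adm_count B 1 M + \sum_(1 <= x < B) adm_count_upto B J (M %/ (3 * x)).
Proof.
rewrite /adm_count_upto big_ord_recl /=; congr addn.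
by under eq_bigr do rewrite adm_countS; rewrite exchange_big.
Qed.

Lemma adm_count_upto_lt3 (B J M : nat) : M < 3 -> adm_count_upto B J M = 0.
Proof.
move=> M_lt3; apply: big1 => j _.
rewrite adm_countS big_nat_cond big1 // => x /andP[/andP[x_gt0 _] _].
by rewrite divn_small ?adm_count_bound0 // (leq_trans M_lt3) ?leq_pmulr.
Qed.

Lemma adm_count1_le (B M : nat) : adm_count B 1 M <= M %/ 3.
Proof.
have -> : adm_count B 1 M = count (fun x => x <= M %/ 3) (index_iota 1 B).
  rewrite adm_countS -sum1_count [RHS]big_mkcond.
  apply: eq_big_nat => x /andP[x_gt0 _].
  by rewrite adm_count_nil divn_gt0 ?muln_gt0 // leq_divRL // mulnC; case: leqP.
rewrite -size_filter -[leqRHS](size_iota 1); apply: uniq_leq_size.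
  by rewrite filter_uniq ?iota_uniq.
by move=> x; rewrite mem_filter !mem_iota => /andP[x_le /andP[x_gt0 _]]; lia.
Qed.

Local Open Scope ring_scope.

Section RealEstimates.
Variable R : realType.
Implicit Types a b x r Y : R.

Lemma inv_cube_le_inv_diff a b : 0 < a -> 0 <= b -> b ^+ 2 = a ^+ 2 + 1 ->
  (b ^+ 3)^-1 <= 2 / a - 2 / b.
Proof.
move=> a_gt0 b_ge0 b2E.
have b_gt0 : 0 < b by nra.
have key : a + 2 * a * b ^+ 2 <= 2 * b ^+ 3.
  have sqrD : (2 * b ^+ 3) ^+ 2 - (a + 2 * a * b ^+ 2) ^+ 2 = 3 * a ^+ 2 + 4.
    have -> : (2 * b ^+ 3) ^+ 2 = 4 * (b ^+ 2) ^+ 3 by ring.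
    by rewrite b2E; ring.
  have : 0 < 2 * b ^+ 3 + (a + 2 * a * b ^+ 2) by rewrite !exprS expr0; nra.
  nra.
rewrite -subr_ge0.
have -> : 2 / a - 2 / b - (b ^+ 3)^-1 =
    (2 * b ^+ 3 - (a + 2 * a * b ^+ 2)) / (a * b ^+ 3).
  by field; rewrite !gt_eqF.
by rewrite divr_ge0 ?subr_ge0 // mulr_ge0 ?exprn_ge0 ?ltW.
Qed.

Lemma sum_inv_cube_sqrt_le n :
  \sum_(1 <= k < n.+2) (Num.sqrt k%:R ^+ 3)^-1 <= 3 - 2 / Num.sqrt n.+1%:R :> R.
Proof.
elim: n => [|n IH].
  by rewrite big_nat1 sqrtr1 expr1n invr1; lra.
rewrite big_nat_recr //=; apply: le_trans (lerD IH (lexx _)) _.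
have := @inv_cube_le_inv_diff (Num.sqrt n.+1%:R) (Num.sqrt n.+2%:R).
rewrite sqrtr_gt0 ltr0n sqrtr_ge0 !sqr_sqrtr ?ler0n // -natr1 => /(_ isT isT erefl).
lra.
Qed.

Lemma sqrt_cube_le_powR x r : 1 <= x -> 3 / 2 <= r -> Num.sqrt x ^+ 3 <= x `^ r.
Proof.
move=> x_ge1 r_ge.
rewrite -powR12_sqrt ?(le_trans ler01) // -powR_mulrn ?powR_ge0 // -powRrM.
by apply: ler_powR => //; lra.
Qed.

Lemma sum_inv_powR_le3 r n : 3 / 2 <= r -> \sum_(1 <= k < n) (k%:R `^ r)^-1 <= 3 :> R.
Proof.
move=> r_ge; case: n => [|[|n]]; try by rewrite big_geq.
apply: (@le_trans _ _ (\sum_(1 <= k < n.+2) (Num.sqrt k%:R ^+ 3)^-1)).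
  apply: ler_sum_nat => k /andP[k_gt0 _].
  have k_ge1 : 1 <= k%:R :> R by rewrite ler1n.
  rewrite lef_pV2 ?posrE ?powR_gt0 ?exprn_gt0 ?sqrtr_gt0 ?sqrt_cube_le_powR //; lra.
apply: le_trans (sum_inv_cube_sqrt_le n) _.
have : 0 <= 2 / Num.sqrt n.+1%:R :> R by rewrite divr_ge0 ?sqrtr_ge0.
lra.
Qed.

Lemma powR23_three_ge2 : 2 <= 3 `^ (2 / 3) :> R.
Proof.
set p := 3 `^ (2 / 3).
have p_ge0 : 0 <= p by apply: powR_ge0.
have p3 : p ^+ 3 = 9.
  rewrite /p -powR_mulrn ?powR_ge0 // -powRrM.
  have -> : 2 / 3 * 3%:R = 2%:R :> R by field.
  by rewrite powR_mulrn ?expr2; lra.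
rewrite !exprS expr0 mulr1 in p3; nra.
Qed.

Lemma powR53_absorbs Y : 3 <= Y -> Y + 3 * (Y / 3) `^ (5 / 3) <= Y `^ (5 / 3).
Proof.
move=> Y_ge3.
have powR53E z : 0 <= z -> z `^ (5 / 3) = z * z `^ (2 / 3).
  move=> z_ge0; rewrite -{2}(powRr1 z_ge0) -powRD; first by congr (_ `^ _); lra.
  by apply/implyP => /eqP; lra.
have u_ge1 : 1 <= (Y / 3) `^ (2 / 3).
  by rewrite -[leLHS](powRr0 (Y / 3)) ler_powR //; lra.
have Y23E : Y `^ (2 / 3) = (Y / 3) `^ (2 / 3) * 3 `^ (2 / 3).
  by rewrite -powRM ?divfK //; lra.
rewrite !powR53E ?Y23E; try lra.
have := powR23_three_ge2; move: u_ge1.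
set u := (Y / 3) `^ _; set p := 3 `^ _ => u_ge1 p_ge2.
have -> : Y + 3 * (Y / 3 * u) = Y * (1 + u) by field.
by apply: ler_wpM2l; nra.
Qed.

Lemma powR_divn_le (M x : nat) r : (0 < x)%N -> 0 <= r ->
  ((M %/ (3 * x))%:R / 3) `^ r <= (M%:R / 3 / 3) `^ r / x%:R `^ r.
Proof.
move=> x_gt0 r_ge0; have x_pos : 0 < x%:R :> R by rewrite ltr0n.
have -> : (M%:R / 3 / 3) `^ r / x%:R `^ r = (M%:R / 3 / 3 / x%:R) `^ r.
  rewrite -[in LHS](divfK (lt0r_neq0 x_pos) (M%:R / 3 / 3)) powRM ?divr_ge0 //.
  by rewrite mulfK // gt_eqF // powR_gt0.
apply: ge0_ler_powR; rewrite // ?nnegrE ?divr_ge0 //.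
rewrite -subr_ge0; set q := (M %/ (3 * x))%N.
have -> : M%:R / 3 / 3 / x%:R - q%:R / 3 =
    (M%:R - (q * (3 * x))%:R) / (9 * x%:R) :> R.
  by rewrite !natrM; field; rewrite gt_eqF.
by rewrite divr_ge0 ?subr_ge0 ?ler_nat ?leq_divM // mulr_ge0 ?ltW.
Qed.

Lemma adm_count_upto_le (B J M : nat) :
  (adm_count_upto B J M)%:R <= (M%:R / 3) `^ (5 / 3) :> R.
Proof.
elim: J M => [|J IH] M; first by rewrite /adm_count_upto big_ord0 powR_ge0.
have [M_lt3 | M_ge3] := ltnP M 3; first by rewrite adm_count_upto_lt3 ?powR_ge0.
have count1_le : (adm_count B 1 M)%:R <= M%:R / 3 :> R.
  rewrite ler_pdivlMr // -natrM ler_nat -leq_divRL //; exact: adm_count1_le.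
rewrite adm_count_uptoS natrD natr_sum.
have [M_lt9 | M_ge9] := ltnP M 9.
  rewrite big_nat_cond big1 ?addr0 => [|x /andP[/andP[x_gt0 _] _]]; last first.
    rewrite adm_count_upto_lt3 // divnMA (leq_ltn_trans (leq_div _ _)) //.
    by rewrite ltn_divLR.
  apply: le_trans count1_le (le1r_powR _ _); last lra.
  by rewrite ler_pdivlMr // mul1r ler_nat.
have Y_ge3 : 3 <= M%:R / 3 :> R by rewrite ler_pdivlMr // -natrM ler_nat.
apply: le_trans _ (powR53_absorbs _ Y_ge3); apply: lerD count1_le _.
apply: (@le_trans _ _
  (\sum_(1 <= x < B) (M%:R / 3 / 3) `^ (5 / 3) / x%:R `^ (5 / 3))).
  apply: ler_sum_nat => x /andP[x_gt0 _].
  by apply: le_trans (IH _) (powR_divn_le _ _ _ x_gt0 _); lra.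
rewrite -mulr_sumr mulrC ler_wpM2r ?powR_ge0 // sum_inv_powR_le3 //; lra.
Qed.
End RealEstimates.

Lemma Nstar_adm_count_upto (R : realType) (X : R) : 0 <= X ->
  Nstar X = adm_count_upto (Num.truncn X).+1 (Num.truncn X) (Num.truncn X).
Proof.
move=> X_ge0; rewrite /Nstar /adm_count_upto big_add1 /= big_mkord.
apply: eq_bigr => j _; rewrite -card_admissible_tuples; apply: eq_card => t.
by rewrite !inE /good_tuple /admissible truncn_ge_nat.
Qed.

Theorem lemma3 (R : realType) :
  (forall X : R, 0 < X -> X < 3 -> Nstar X = 0%N) /\
  (forall X : R, 0 < X -> (Nstar X)%:R <= (X / 3) `^ (5 / 3)).
Proof.
split=> [X X_gt0 X_lt3 | X X_gt0]; rewrite Nstar_adm_count_upto ?(ltW X_gt0) //.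
  by rewrite adm_count_upto_lt3 // truncn_lt_nat ?(ltW X_gt0).
apply: le_trans (adm_count_upto_le _ _ _ _) _.
apply: ge0_ler_powR; rewrite ?nnegrE ?divr_ge0 ?(ltW X_gt0) //.
by rewrite ler_pM2r ?invr_gt0 // truncn_le (ltW X_gt0).
Qed.
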